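(* Let $X$ be an arbitrary set and $P\subseteq X\times X$ a binary relation, and let $Q=\{(x,y)\in X\times X:(y,x)\notin P\}$. Then $P$ is complete and negatively transitive if and only if there is a family $\mathcal V$ of functions $v:X\to\mathbb R$ such that for all $x,y\in X$: $(x,y)\in Q$ if and only if $v(x)\geq v(y)$ for all $v\in\mathcal V$ and $v(x)>v(y)$ for some $v\in\mathcal V$ (i.e. $P$ is embeddable in $\mathbb R^{\mathcal V}$ with the Pareto order).
   Context: $P$ is complete if for all $x,y$, $(x,y)\in P$ or $(y,x)\in P$; negatively transitive if $(x,y)\notin P$ and $(y,z)\notin P$ imply $(x,z)\notin P$. The Pareto order on $\mathbb R^I$: $(x_\alpha)\succ(y_\alpha)$ iff $x_\alpha\geq y_\alpha$ for all $\alpha\in I$ and $x_\alpha>y_\alpha$ for some $\alpha\in I$; $x\succeq y$ means not $y\succ x$. *)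

From Stdlib Require Import Reals.
Open Scope R_scope.

Definition complete {X : Type} (P : X -> X -> Prop) : Prop :=
  forall x y : X, P x y \/ P y x.

Definition negatively_transitive {X : Type} (P : X -> X -> Prop) : Prop :=
  forall x y z : X, ~ P x y -> ~ P y z -> ~ P x z.

Definition asym_part {X : Type} (P : X -> X -> Prop) : X -> X -> Prop :=
  fun x y => ~ P y x.

Definition pareto_gt {X : Type} (V : (X -> R) -> Prop) (x y : X) : Prop :=
  (forall v, V v -> v x >= v y) /\ (exists v, V v /\ v x > v y).

(* A relation P is complete and negatively transitive exactly when its
   asymmetric part Q is asymmetric and transitive, and the strict Pareto order
   on any R^V has both properties.  Conversely every strict partial order Q is
   a Pareto order: for each z take the indicator of the complement of the
   principal down-set {x | x = z \/ Q z x}; at z = y this indicator separates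
   x from y whenever Q x y. *)
From Stdlib Require Import Reals Lra Classical ClassicalEpsilon.
Open Scope R_scope.

Section ParetoOrder.

Variables (X : Type) (V : (X -> R) -> Prop).

Lemma pareto_gt_trans (x y z : X) :
  pareto_gt V x y -> pareto_gt V y z -> pareto_gt V x z.
Proof.
  intros [Hxy [v [Hv Hv_xy]]] [Hyz _]; split.
  - intros w Hw; specialize (Hxy w Hw); specialize (Hyz w Hw); lra.
  - exists v; split; [exact Hv|]; specialize (Hyz v Hv); lra.
Qed.

Lemma pareto_gt_asym (x y : X) : pareto_gt V x y -> ~ pareto_gt V y x.
Proof.
  intros [_ [v [Hv Hv_xy]]] [Hyx _]; specialize (Hyx v Hv); lra.
Qed.

End ParetoOrder.

Definition outside_downset {X : Type} (Q : X -> X -> Prop) (z : X) : X -> R :=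
  fun x => if excluded_middle_informative (x = z \/ Q z x) then 0 else 1.

Lemma strict_order_pareto_representation {X : Type} (Q : X -> X -> Prop) :
  (forall x, ~ Q x x) ->
  (forall x y z, Q x y -> Q y z -> Q x z) ->
  exists V : (X -> R) -> Prop, forall x y, Q x y <-> pareto_gt V x y.
Proof.
  intros Hirr Htrans.
  exists (fun v => exists z, v = outside_downset Q z).
  intros x y; unfold pareto_gt, outside_downset; split.
  - intros Hxy; split.
    + intros v [z ->].
      destruct (excluded_middle_informative (x = z \/ Q z x)) as [Hx|Hx];
        destruct (excluded_middle_informative (y = z \/ Q z y)) as [Hy|Hy];
        try lra.
      exfalso; apply Hy; right.
      destruct Hx as [->|Hzx]; [exact Hxy | exact (Htrans _ _ _ Hzx Hxy)].
    + exists (outside_downset Q y); split; [now exists y|].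
      unfold outside_downset.
      destruct (excluded_middle_informative (x = y \/ Q y x)) as [[->|Hyx]|_].
      * exfalso; exact (Hirr y Hxy).
      * exfalso; exact (Hirr x (Htrans _ _ _ Hxy Hyx)).
      * destruct (excluded_middle_informative (y = y \/ Q y y)) as [_|Hy];
          [lra | exfalso; apply Hy; now left].
  - intros [Hge [v [[z ->] Hgt]]].
    specialize (Hge (outside_downset Q x) (ex_intro _ x eq_refl)).
    unfold outside_downset in Hge.
    destruct (excluded_middle_informative (x = x \/ Q x x)) as [_|Hx];
      [| exfalso; apply Hx; now left].
    destruct (excluded_middle_informative (y = x \/ Q x y)) as [[->|Hxy]|_];
      [| exact Hxy | lra].
    destruct (excluded_middle_informative (x = z \/ Q z x)); lra.
Qed.

Lemma complete_iff_asym_part_asym {X : Type} (P : X -> X -> Prop) :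
  complete P <-> forall x y, asym_part P x y -> ~ asym_part P y x.
Proof.
  unfold complete, asym_part; split.
  - intros Hc x y Hyx Hxy; destruct (Hc x y); auto.
  - intros Hasym x y; apply NNPP; intros Hneither.
    apply not_or_and in Hneither as [Hxy Hyx].
    exact (Hasym x y Hyx Hxy).
Qed.

Lemma negatively_transitive_iff_asym_part_trans {X : Type} (P : X -> X -> Prop) :
  negatively_transitive P <->
  forall x y z, asym_part P x y -> asym_part P y z -> asym_part P x z.
Proof.
  unfold negatively_transitive, asym_part; split; intros H x y z; eauto.
Qed.

Theorem theorem10 (X : Type) (P : X -> X -> Prop) :
  (complete P /\ negatively_transitive P) <->
  exists V : (X -> R) -> Prop,
    forall x y : X, asym_part P x y <-> pareto_gt V x y.
Proof.
  rewrite complete_iff_asym_part_asym, negatively_transitive_iff_asym_part_trans.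
  split.
  - intros [Hasym Htrans]; apply strict_order_pareto_representation; auto.
    intros x Hxx; exact (Hasym x x Hxx Hxx).
  - intros [V HV]; split.
    + intros x y Hxy Hyx.
      apply HV in Hxy; apply HV in Hyx; exact (pareto_gt_asym X V x y Hxy Hyx).
    + intros x y z Hxy Hyz; apply HV.
      apply HV in Hxy; apply HV in Hyz; exact (pareto_gt_trans X V x y z Hxy Hyz).
Qed.
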